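(* Let $m\ge 1$ and let $q$ be an $m\times m$ matrix each of whose entries is either $0$ or an indeterminate, where the indeterminates occurring in $q$ are pairwise distinct and algebraically independent over a field $F$ ($F=\mathbb{R}$ or $\mathbb{C}$). Suppose that $\det q$, viewed as a polynomial in $F[\text{indeterminates}]$, is irreducible. Then every first minor of $q$ (the determinant of any $(m-1)\times(m-1)$ submatrix obtained by deleting one row and one column; for $m=1$ this is the empty determinant $1$) is a nonzero polynomial. Consequently, for almost all values of the hopping terms, every first minor of $q$ is nonzero.
   Context: In the physical interpretation, $q$ is the off-diagonal block of a chiral tight-binding Hamiltonian $H=\begin{pmatrix}0&q\\ q^\dagger&0\end{pmatrix}$ on a bipartite graph with equal numbers of ''black'' and ''white'' sites: rows of $q$ are indexed by one sublattice, columns by the other, and the entry for a pair of sites is an indeterminate (a ''hopping term'') if the sites are joined by an edge and $0$ otherwise. Deleting a row and a column corresponds to deleting one white and one black site. ''For almost all values of the hopping terms'' means: for all assignments of values in $F$ to the indeterminates outside the zero set of some nonzero polynomial. *)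

From mathcomp Require Import all_boot all_algebra.
From mathcomp Require Import mpoly.
Import GRing.Theory.

Set Implicit Arguments.
Unset Strict Implicit.
Unset Printing Implicit Defensive.

Local Open Scope ring_scope.

Definition irreducible_elt (R : idomainType) (p : R) : Prop :=
  [/\ p != 0, p \isn't a GRing.unit &
      forall a b : R, p = a * b -> a \is a GRing.unit \/ b \is a GRing.unit].

(* The "pattern" matrix q of size m x m attached to the support
   S : 'I_m -> 'I_m -> bool (S i j = true iff sites i and j are joined by an
   edge).  The polynomial ring has one indeterminate per position (i,j),
   indexed by mxvec_index i j : 'I_(m * m); so the indeterminates occurring
   in q are pairwise distinct and algebraically independent over F. *)
Definition pattern_mx (F : fieldType) (m : nat) (S : 'I_m -> 'I_m -> bool)
  : 'M[{mpoly F[m * m]}]_m :=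
  \matrix_(i, j) (if S i j then 'X_(mxvec_index i j) else 0).

Definition first_minor (R : comNzRingType) (n : nat) (A : 'M[R]_n.+1)
  (i j : 'I_n.+1) : R := \det (row' i (col' j A)).

From mathcomp Require Import all_boot all_algebra all_fingroup.
From mathcomp Require Import mpoly.
Import GRing.Theory.
Set Implicit Arguments.
Unset Strict Implicit.
Unset Printing Implicit Defensive.
Local Open Scope ring_scope.

(* Since det q <> 0, some permutation s has all entries q a (s a) nonzero.
   Consider the directed graph a -> b iff q a (s b) <> 0.  If b were not
   reachable from a, the set C of vertices reachable from a would be closed,
   and det q would factor as det (rows of q on C) * det P_s^-1 *
   det (rows of q off C), two of the factors vanishing at the origin,
   contradicting irreducibility.  For the (i, j) minor, reroute s along a
   simple path from s^-1 j to i into a permutation pi with pi i = j and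
   q b (pi b) <> 0 off row i; evaluating q at the indicator of the graph of
   pi turns the minor into a cofactor of a permutation matrix, which is +-1.
   For the generic statement take P to be the product of all first minors. *)

Lemma det_support_perm (R : comNzRingType) m (A : 'M[R]_m) :
  \det A != 0 -> exists s : 'S_m, forall a, A a (s a) != 0.
Proof.
move=> detA.
have [s /forallP supp | nosupp] := pickP [pred s : 'S_m | [forall a, A a (s a) != 0]].
  by exists s.
case/eqP: detA; apply: big1 => s _.
have /forallPn[a /negPn/eqP Aa0] := negbT (nosupp s).
by rewrite (bigD1 a) //= Aa0 mul0r mulr0.
Qed.

Lemma det_row_eq0 (R : comNzRingType) m (A : 'M[R]_m) i :
  (forall j, A i j = 0) -> \det A = 0.
Proof. by move=> Ai0; rewrite (expand_det_row _ i) big1 // => j _; rewrite Ai0 mul0r. Qed.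

Lemma nonunit_rmorph_eq0 (R S : unitRingType) (f : {rmorphism R -> S}) x :
  f x = 0 -> x \isn't a GRing.unit.
Proof. by move=> fx0; apply/negP => /(rmorph_unit f); rewrite fx0 unitr0. Qed.

Lemma minor_perm_mx_neq0 (R : comNzRingType) n (pi : 'S_n.+1) i :
  \det (row' i (col' (pi i) (perm_mx pi : 'M[R]_n.+1))) != 0.
Proof.
have := expand_det_row (perm_mx pi : 'M[R]_n.+1) i.
rewrite (bigD1 (pi i)) //= big1 => [|j /negPf]; last first.
  by rewrite !mxE eq_sym => ->; rewrite mul0r.
rewrite addr0 !mxE eqxx mul1r det_perm /cofactor => sign_eq.
by apply/eqP => minor0; move/eqP: sign_eq; rewrite minor0 mulr0 signr_eq0.
Qed.

(* Closedness of C means that the rows of q in C only meet the columns s C. *)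
Lemma closed_rows_factor_mx (R : comNzRingType) m (q : 'M[R]_m) (s : 'S_m)
    (C : {set 'I_m}) :
  (forall a b, a \in C -> b \notin C -> q a (s b) = 0) ->
  q = (\matrix_(a, c) if a \in C then q a c else (s a == c)%:R)
      *m (perm_mx s)^T *m (\matrix_(a, c) if a \in C then (s a == c)%:R else q a c).
Proof.
move=> qC; rewrite tr_perm_mx -col_permE; apply/matrixP=> a c; rewrite !mxE.
under eq_bigr => b _ do rewrite !mxE.
have [aC | aNC] := boolP (a \in C).
  rewrite (bigD1 (s^-1 c)%g) //= big1 ?addr0 => [|b bNc].
    rewrite permKV; have [cC | cNC] := boolP (_ \in C); first by rewrite eqxx mulr1.
    suff -> : q a c = 0 by rewrite mul0r.
    by rewrite -(permKV s c) qC.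
  have [bC | bNC] := boolP (b \in C); last by rewrite qC ?mul0r.
  suff /negPf -> : s b != c by rewrite mulr0.
  by apply: contra bNc => /eqP <-; rewrite permK.
rewrite (bigD1 a) //= big1 ?addr0 => [|b bNa]; first by rewrite eqxx mul1r (negPf aNC).
by rewrite (inj_eq perm_inj) eq_sym (negPf bNa) mul0r.
Qed.

(* pi sends each vertex of the path to the s-image of its successor and the
   endpoint i back to s a, a cyclic shift of s along the path. *)
Lemma perm_reroute_path m (r : rel 'I_m) (s : 'S_m) (i : 'I_m) :
  (forall b, r b (s b)) -> forall a p,
  path (fun x y => r x (s y)) a p -> last a p = i -> uniq (a :: p) ->
  exists pi : 'S_m, [/\ pi i = s a, forall b, b != i -> r b (pi b)
                      & forall b, b \notin a :: p -> pi b = s b].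
Proof.
move=> rs a p; elim: p a => [|a1 p IHp] a /=; first by move=> _ -> _; exists s.
case/andP=> ra1 pth lst /andP[aNp upath].
have [pi [pi_i r_pi pi_out]] := IHp a1 pth lst upath.
have aNi : a != i by apply: contraNneq aNp => ->; rewrite -lst mem_last.
exists (tperm i a * pi)%g; split.
- by rewrite permM tpermL pi_out.
- move=> b bNi; rewrite permM; case: tpermP => [/eqP | -> | _ _]; last exact: r_pi.
    by rewrite (negPf bNi).
  by rewrite pi_i.
- move=> b; rewrite inE negb_or => /andP[bNa bNp].
  have bNi : b != i by apply: contraNneq bNp => ->; rewrite -lst mem_last.
  by rewrite permM tpermD 1?eq_sym // pi_out.
Qed.

Lemma det_row_root_nonunit (F : fieldType) N m (A : 'M[{mpoly F[N]}]_m) k v :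
  (forall j, (A k j).@[v] = 0) -> \det A \isn't a GRing.unit.
Proof.
move=> Ak_root; apply: (@nonunit_rmorph_eq0 _ _ (meval v)).
by rewrite -det_map_mx (@det_row_eq0 _ _ _ k) // => j; rewrite mxE; apply: Ak_root.
Qed.

Lemma irreducible_det_connect (F : fieldType) N m (q : 'M[{mpoly F[N]}]_m)
    (s : 'S_m) k i :
  (forall a b, (q a b).@[fun _ => 0] = 0) -> irreducible_elt (\det q) ->
  connect (fun a b => q a (s b) != 0) k i.
Proof.
move=> q_origin irr_q; apply/negPn/negP => kNi.
pose C := [set a | connect (fun a b => q a (s b) != 0) k a].
have qC a b : a \in C -> b \notin C -> q a (s b) = 0.
  rewrite !inE => ka; apply: contraNeq => qab; exact: connect_trans ka (connect1 qab).
have det_q := etrans (congr1 determinant (closed_rows_factor_mx qC)) (det_mulmx _ _).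
have [_ _ /(_ _ _ det_q)] := irr_q.
rewrite det_mulmx unitrM => -[/andP[] + _ | ]; apply/negP.
- apply: (det_row_root_nonunit (k := k) (v := fun _ => 0)) => j.
  by rewrite mxE inE connect0.
- apply: (det_row_root_nonunit (k := i) (v := fun _ => 0)) => j.
  by rewrite mxE inE (negPf kNi).
Qed.

Lemma mxvec_index_eq m n (a b : 'I_m) (c d : 'I_n) :
  (mxvec_index a c == mxvec_index b d) = ((a, c) == (b, d)).
Proof. by rewrite (inj_eq (@cast_ord_inj _ _ _)) (inj_eq enum_rank_inj). Qed.

Lemma first_minor_pattern_mx_neq0 (F : fieldType) n
    (S : 'I_n.+1 -> 'I_n.+1 -> bool) (pi : 'S_n.+1) i :
  (forall b, b != i -> S b (pi b)) -> first_minor (pattern_mx F S) i (pi i) != 0.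
Proof.
move=> S_pi.
pose v u := if [exists b, (b != i) && (u == mxvec_index b (pi b))] then 1 else 0 : F.
suff: (first_minor (pattern_mx F S) i (pi i)).@[v] != 0.
  by apply: contraNneq => ->; rewrite meval0.
rewrite -det_map_mx.
suff -> : map_mx (meval v) (row' i (col' (pi i) (pattern_mx F S))) =
          row' i (col' (pi i) (perm_mx pi)) by apply: minor_perm_mx_neq0.
apply/matrixP=> a c; rewrite !mxE.
have liNi : lift i a != i by rewrite eq_sym neq_lift.
have v_pi : v (mxvec_index (lift i a) (lift (pi i) c)) =
             (pi (lift i a) == lift (pi i) c)%:R.
  rewrite /v; case: existsP => [[b /andP[_]] | noidx].
    by rewrite mxvec_index_eq xpair_eqE => /andP[/eqP <- /eqP ->]; rewrite eqxx.
  case: eqP => // pi_a; case: noidx; exists (lift i a); by rewrite liNi -pi_a eqxx.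
case: ifP => [_ | Sac]; first by rewrite mevalXU v_pi.
rewrite meval0; case: eqP => // pi_a; by move: (S_pi _ liNi); rewrite pi_a Sac.
Qed.

Theorem mainTheorem1 (F : fieldType) (n : nat)
  (S : 'I_n.+1 -> 'I_n.+1 -> bool) :
  irreducible_elt (\det (pattern_mx F S)) ->
  (forall i j : 'I_n.+1, first_minor (pattern_mx F S) i j != 0) /\
  (exists P : {mpoly F[n.+1 * n.+1]},
     P != 0 /\
     forall v : 'I_(n.+1 * n.+1) -> F, P.@[v] != 0 ->
       forall i j : 'I_n.+1, (first_minor (pattern_mx F S) i j).@[v] != 0).
Proof.
set q := pattern_mx F S => irr_q.
have q_supp a b : q a b != 0 -> S a b by apply: contraNT => Sab; rewrite mxE (negPf Sab).
have q_origin a b : (q a b).@[fun _ => 0] = 0.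
  by rewrite mxE; case: ifP => _; rewrite ?mevalXU ?meval0.
have [det_q_neq0 _ _] := irr_q.
have [s q_s] := det_support_perm det_q_neq0.
have minor_neq0 i j : first_minor q i j != 0.
  have /connectP[p pth lst] := irreducible_det_connect s (s^-1 j)%g i q_origin irr_q.
  case: (shortenP pth) lst => p' pth' upath' _ lst'.
  have [pi [pi_i q_pi _]] :=
    perm_reroute_path (r := fun a b => q a b != 0) q_s pth' (esym lst') upath'.
  rewrite -[j](permKV s) -pi_i.
  by apply: first_minor_pattern_mx_neq0 => b /q_pi; apply: q_supp.
split=> //; exists (\prod_i \prod_j first_minor q i j); split.
  by apply/prodf_neq0 => i _; apply/prodf_neq0 => j _.
move=> v; rewrite rmorph_prod => /prodf_neq0 nz_i i j.
by move: (nz_i i isT); rewrite rmorph_prod => /prodf_neq0; apply.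
Qed.
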